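(* Let $\Theta$ be a quantum superchannel from $\mathrm{CPTP}(A\to B)$ to $\mathrm{CPTP}(A'\to B)$ written in standard form $\Theta[\mathcal{N}]=\mathcal{E}^{RB\to B}\circ\mathcal{N}^{A\to B}\circ\mathcal{V}^{A'\to RA}$. The following are equivalent: (1) $\Theta$ is completely uniformity-preserving; (2) the channel $\Theta\otimes\mathbb{1}^{(\mathbb{C}\to C)}\big[\mathbf{u}^B\otimes\mathrm{id}^{A\to C}\big]\in\mathrm{CPTP}(A'\to BC)$, where $C$ is a replica of $A$ and $\mathbf{u}^B\otimes\mathrm{id}^{A\to C}$ is the channel $\rho^A\mapsto\mathbf{u}^B\otimes\rho^C$, is marginally uniform with respect to $B$; (3) $\Theta$ is a mixing superchannel, i.e. $\mathcal{E}^{RB\to B}$ is conditionally unital.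
   Context: Systems are finite-dimensional; $\mathrm{CPTP}(A\to B)$ is the set of quantum channels; $\mathbf{u}^B=I^B/|B|$. Every superchannel can be realized as $\Theta[\mathcal{N}]=\mathcal{E}^{RB\to B}\circ\mathcal{N}^{A\to B}\circ\mathcal{V}^{A'\to RA}$ with an auxiliary system $R$, an isometry channel $\mathcal{V}$ and a channel $\mathcal{E}$ (identity on systems not acted upon); it is in standard form if $|R|$ is the minimal possible dimension among such realizations. For systems $C_0,C_1$, $\Theta\otimes\mathbb{1}^{(C_0\to C_1)}$ acts on $\mathcal{N}^{AC_0\to BC_1}$ by $\mathcal{E}^{RB\to B}\circ\mathcal{N}^{AC_0\to BC_1}\circ\mathcal{V}^{A'\to RA}$. A channel $\mathcal{N}\in\mathrm{CPTP}(AC_0\to BC_1)$ is marginally uniform with respect to $B$ if $\mathcal{N}=\mathbf{u}^B\otimes\mathcal{N}^{AC_0\to C_1}$ where $\mathcal{N}^{AC_0\to C_1}=\mathrm{Tr}_B\circ\mathcal{N}$. $\Theta$ is completely uniformity-preserving if for all systems $C_0,C_1$ and every marginally uniform $\mathcal{N}^{AC_0\to BC_1}$, $\Theta\otimes\mathbb{1}^{(C_0\to C_1)}[\mathcal{N}]$ is marginally uniform with respect to $B$. A channel $\mathcal{E}\in\mathrm{CPTP}(RB\to B)$ is conditionally unital if for every density matrix $\tau^R$ the channel $\omega^B\mapsto\mathcal{E}(\tau^R\otimes\omega^B)$ is unital, i.e. $\mathcal{E}(\tau^R\otimes\mathbf{u}^B)=\mathbf{u}^B$. *)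

(* Finite-dimensional quantum systems are modelled by finite
   types X (the index set of an orthonormal basis); operators on X are
   X -> X -> C with C an arbitrary numClosedFieldType (e.g. complex numbers). *)
From mathcomp Require Import all_boot all_order all_algebra.
Set Implicit Arguments. Unset Strict Implicit. Unset Printing Implicit Defensive.
Import Order.TTheory GRing.Theory Num.Theory.
Local Open Scope ring_scope.

Section Quantum.
Variable C : numClosedFieldType.

Definition op (X : finType) := X -> X -> C.

Definition tr (X : finType) (M : op X) : C := \sum_x M x x.

Definition psd (X : finType) (M : op X) : Prop :=
  forall v : X -> C, 0 <= \sum_x \sum_y (v x)^* * M x y * v y.

Definition density (X : finType) (M : op X) : Prop := psd M /\ tr M = 1.

Definition opT (X Y : finType) (M : op X) (N : op Y) : op (X * Y)%type :=
  fun p q => M p.1 q.1 * N p.2 q.2.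

Definition unif (X : finType) : op X := fun x y => (x == y)%:R / #|X|%:R.

Definition ptrL (X Y : finType) (M : op (X * Y)%type) : op Y :=
  fun y y' => \sum_x M (x, y) (x, y').

Definition is_linear (X Y : finType) (f : op X -> op Y) : Prop :=
  forall (a : C) (M N : op X) x y,
    f (fun u v => a * M u v + N u v) x y = a * f M x y + f N x y.

Definition idtens (K X Y : finType) (f : op X -> op Y) : op (K * X)%type -> op (K * Y)%type :=
  fun M p q => f (fun x x' => M (p.1, x) (q.1, x')) p.2 q.2.
Definition tensid (K X Y : finType) (f : op X -> op Y) : op (X * K)%type -> op (Y * K)%type :=
  fun M p q => f (fun x x' => M (x, p.2) (x', q.2)) p.1 q.1.

Definition CP (X Y : finType) (f : op X -> op Y) : Prop :=
  forall (K : finType) (M : op (K * X)%type), psd M -> psd (idtens f M).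
Definition TP (X Y : finType) (f : op X -> op Y) : Prop :=
  forall M : op X, tr (f M) = tr M.

Definition channel (X Y : finType) (f : op X -> op Y) : Prop :=
  [/\ is_linear f, CP f & TP f].

Definition is_isometry (X Y : finType) (V : Y -> X -> C) : Prop :=
  forall x1 x2, \sum_y (V y x1)^* * V y x2 = (x1 == x2)%:R.
Definition isoch (X Y : finType) (V : Y -> X -> C) : op X -> op Y :=
  fun M p q => \sum_x1 \sum_x2 V p x1 * M x1 x2 * (V q x2)^*.

Definition assocLR (X Y Z : finType) (M : op ((X * Y) * Z)%type) : op (X * (Y * Z))%type :=
  fun p q => M ((p.1, p.2.1), p.2.2) ((q.1, q.2.1), q.2.2).
Definition assocRL (X Y Z : finType) (M : op (X * (Y * Z))%type) : op ((X * Y) * Z)%type :=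
  fun p q => M (p.1.1, (p.1.2, p.2)) (q.1.1, (q.1.2, q.2)).

Section Super.
Variables (A B A' R : finType).

Definition superch (V : (R * A)%type -> A' -> C) (E : op (R * B)%type -> op B)
  (N : op A -> op B) : op A' -> op B :=
  fun M => E (idtens N (isoch V M)).

(* (Theta (x) 1^{C0->C1})[N] = E o N^{AC0->BC1} o V *)
Definition superext (V : (R * A)%type -> A' -> C) (E : op (R * B)%type -> op B)
  (C0 C1 : finType) (N : op (A * C0)%type -> op (B * C1)%type) : op (A' * C0)%type -> op (B * C1)%type :=
  fun M => tensid E (assocRL (idtens N (assocLR (tensid (isoch V) M)))).

End Super.

Definition marg_unif (B X Y : finType) (N : op X -> op (B * Y)%type) : Prop :=
  forall M p q, N M p q = opT (@unif B) (ptrL (N M)) p q.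

(* standard form: |R| minimal among all realizations of the same superchannel
   (equality as maps on all linear maps A -> B) *)
Definition std_form (A B A' R : finType) (V : (R * A)%type -> A' -> C)
  (E : op (R * B)%type -> op B) : Prop :=
  forall (R' : finType) (V' : (R' * A)%type -> A' -> C) (E' : op (R' * B)%type -> op B),
    is_isometry V' -> channel E' ->
    (forall N : op A -> op B, is_linear N ->
       forall M x y, superch V' E' N M x y = superch V E N M x y) ->
    (#|R| <= #|R'|)%N.

Definition compl_unif_pres (A B A' R : finType) (V : (R * A)%type -> A' -> C)
  (E : op (R * B)%type -> op B) : Prop :=
  forall (C0 C1 : finType) (N : op (A * C0)%type -> op (B * C1)%type),
    channel N -> marg_unif N -> marg_unif (superext V E N).

(* the channel rho^{A (x) C} |-> u^B (x) rho^C with C a replica of A and the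
   trivial input system C0 = unit *)
Definition unif_id (A B : finType) : op (A * unit)%type -> op (B * A)%type :=
  fun M => opT (@unif B) (fun a a' => M (a, tt) (a', tt)).

Definition cond_unital (R B : finType) (E : op (R * B)%type -> op B) : Prop :=
  forall tau : op R, density tau ->
    forall b b', E (opT tau (@unif B)) b b' = @unif B b b'.

End Quantum.

From mathcomp Require Import all_boot all_order all_algebra ring.
From Stdlib Require Import FunctionalExtensionality.
Import Order.TTheory GRing.Theory Num.Theory.
Set Implicit Arguments. Unset Strict Implicit. Unset Printing Implicit Defensive.
Local Open Scope ring_scope.

(* (1) => (2) because u^B (x) id is itself a marginally uniform channel.
   (3) => (1): a conditionally unital E satisfies E(X (x) u^B) = tr X u^B for
   every operator X, density matrices spanning all operators, and the output of
   Theta (x) 1 on a marginally uniform N is E applied to such an X (x) u^B.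
   (2) => (3): feeding |x><x'| into (2) yields E(|v><v'| (x) u^B) = <v', v> u^B
   for the vectors v = V(., a) x.  Minimality of R forces these vectors to span
   C^R: a nonzero vector orthogonal to all of them would, through a Householder
   reflection, give a realization with a smaller auxiliary system. Hence the
   |v><v'| span all operators on R and E is conditionally unital. *)

Section Operators.
Variable C : numClosedFieldType.

Lemma op_ext (X Y : Type) (f g : X -> Y -> C) : (forall u v, f u v = g u v) -> f = g.
Proof. by move=> fg; do 2!apply: functional_extensionality => ?; apply: fg. Qed.

Lemma sum_pair (I J : finType) (F : (I * J)%type -> C) :
  \sum_p F p = \sum_i \sum_j F (i, j).
Proof. by rewrite pair_bigA; apply: eq_bigr => -[]. Qed.

Lemma sum_unit (F : unit -> C) : \sum_u F u = F tt.
Proof. by rewrite (big_pred1 tt) // => -[]. Qed.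

Lemma sum_deltal (X : finType) (x0 : X) (F : X -> C) : \sum_x (x == x0)%:R * F x = F x0.
Proof. by rewrite (bigD1 x0) //= eqxx mul1r big1 ?addr0 // => x /negbTE ->; rewrite mul0r. Qed.

Lemma sum_deltar (X : finType) (x0 : X) (F : X -> C) : \sum_x F x * (x == x0)%:R = F x0.
Proof. by rewrite -(sum_deltal x0 F); apply: eq_bigr => x _; rewrite mulrC. Qed.

Lemma sum_unif (B : finType) : (0 < #|B|)%N -> \sum_b @unif C B b b = 1.
Proof.
move=> B_gt0; rewrite /unif; under eq_bigr do rewrite eqxx mul1r.
by rewrite sumr_const -[X in _ *+ X]/(#|B|) -[_ *+ #|B|]mulr_natr mulVf // pnatr_eq0 -lt0n.
Qed.

Lemma exchange_big2 (I J X Y : finType) (F : I -> J -> X -> Y -> C) :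
  \sum_i \sum_j \sum_x \sum_y F i j x y = \sum_x \sum_y \sum_i \sum_j F i j x y.
Proof.
under eq_bigr do rewrite exchange_big /=.
under eq_bigr do under eq_bigr do rewrite exchange_big /=.
by rewrite exchange_big /=; apply: eq_bigr => x _; rewrite exchange_big.
Qed.

Lemma sum_delta_fst_snd (K Y B : finType) (k : K) (b : B) (G : (K * (Y * B))%type -> C)
    (w : Y -> C) :
  \sum_x w x.2.1 * ((x.1 == k) && (x.2.2 == b))%:R * G x = \sum_i w i * G (k, (i, b)).
Proof.
rewrite sum_pair (bigD1 k) //= [S in _ + S]big1 => [|k' /negbTE k'_neq]; last first.
  by apply: big1 => -[i b'] _ /=; rewrite k'_neq /= mulr0 mul0r.
rewrite addr0 sum_pair; apply: eq_bigr => i _ /=.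
rewrite (bigD1 b) //= [S in _ + S]big1 => [|b' /negbTE b'_neq]; last first.
  by rewrite b'_neq andbF mulr0 mul0r.
by rewrite !eqxx addr0 /= mulr1.
Qed.

Definition linear_form (X : finType) (h : op C X -> C) :=
  forall a (M N : op C X), h (fun u v => a * M u v + N u v) = a * h M + h N.

Lemma linear_form_entry (X Y : finType) (f : op C X -> op C Y) y y' :
  is_linear f -> linear_form (fun M => f M y y').
Proof. by move=> f_lin a M N; rewrite f_lin. Qed.

Definition delta_op (X : finType) (x y : X) : op C X :=
  fun u v => (u == x)%:R * (v == y)%:R.

Section LinearForm.
Variables (X : finType) (h : op C X -> C).
Hypothesis h_lin : linear_form h.

Lemma linear_form0 : h (fun _ _ => 0) = 0.
Proof.
have := h_lin 1 (fun _ _ => 0) (fun _ _ => 0).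
rewrite (_ : (fun _ _ => 1 * 0 + 0) = (fun _ _ => 0)) ?mul1r; last first.
  by apply: op_ext => *; rewrite ?mul1r addr0.
by move/eqP; rewrite -subr_eq subrr eq_sym => /eqP.
Qed.

Lemma linear_formZ a (M : op C X) : h (fun u v => a * M u v) = a * h M.
Proof.
rewrite -[RHS]addr0 -linear_form0 -h_lin.
by congr h; apply: op_ext => *; rewrite addr0.
Qed.

Lemma linear_formD (M N : op C X) : h (fun u v => M u v + N u v) = h M + h N.
Proof. by rewrite -[h M]mul1r -h_lin; congr h; apply: op_ext => *; rewrite mul1r. Qed.

Lemma linear_form_sum (I : finType) (F : I -> op C X) :
  h (fun u v => \sum_i F i u v) = \sum_i h (F i).
Proof.
suff sum_seq (r : seq I) : h (fun u v => \sum_(i <- r) F i u v) = \sum_(i <- r) h (F i).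
  exact: sum_seq.
elim: r => [|i r IH].
  rewrite big_nil -[RHS]linear_form0.
  by congr h; apply: op_ext => *; rewrite big_nil.
by rewrite big_cons -IH -linear_formD; congr h; apply: op_ext => *; rewrite big_cons.
Qed.

Lemma linear_form_expand (M : op C X) :
  h M = \sum_x \sum_y M x y * h (delta_op x y).
Proof.
under eq_bigr do under eq_bigr do rewrite -linear_formZ.
under eq_bigr do rewrite -linear_form_sum.
rewrite -linear_form_sum; congr h; apply: op_ext => u v.
rewrite /delta_op (bigD1 u) //= [S in _ + S]big1 => [|x xu]; last first.
  by apply: big1 => y _; rewrite eq_sym (negbTE xu) mul0r mulr0.
rewrite addr0 (bigD1 v) //= [S in _ + S]big1 => [|y yv]; last first.
  by rewrite [v == y]eq_sym (negbTE yv) !mulr0.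
by rewrite !eqxx !mulr1 addr0.
Qed.

End LinearForm.

Lemma sesquilinear_eq0 (X : finType) (H : X -> X -> C) :
  (forall psi : X -> C, \sum_x \sum_y psi x * (psi y)^* * H x y = 0) ->
  forall r s, H r s = 0.
Proof.
move=> H_quad0.
pose form (u v : X -> C) := \sum_x \sum_y u x * (v y)^* * H x y.
have formE u v c : \sum_x \sum_y (u x + c * v x) * (u y + c * v y)^* * H x y =
    form u u + c^* * form u v + c * form v u + c * c^* * form v v.
  rewrite /form !mulr_sumr -!big_split /=; apply: eq_bigr => x _.
  rewrite !mulr_sumr -!big_split /=; apply: eq_bigr => y _.
  rewrite rmorphD rmorphM /=; ring.
(* polarization with the phases 1 and 'i *)
have form0 u v : form u v = 0.
  have quad0 w : form w w = 0 by exact: H_quad0.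
  have e1 := formE v u 1; have ei := formE v u 'i.
  rewrite (H_quad0 (fun x => v x + 1 * u x)) !quad0 rmorph1 in e1.
  rewrite (H_quad0 (fun x => v x + 'i * u x)) !quad0 conjCi in ei.
  have sum0 : form v u + form u v = 0 by rewrite e1; ring.
  have isum0 : - 'i * form v u + 'i * form u v = 0 by rewrite ei; ring.
  have /eqP : 2 * 'i * form u v = 0.
    transitivity ('i * (form v u + form u v) + (- 'i * form v u + 'i * form u v)); first ring.
    by rewrite sum0 isum0 mulr0 addr0.
  by rewrite !mulf_eq0 pnatr_eq0 (negbTE (neq0Ci C)) /= => /eqP.
move=> r s; rewrite -[RHS](form0 (fun x => (x == r)%:R) (fun x => (x == s)%:R)) /form.
under eq_bigr do under eq_bigr do rewrite rmorph_nat -mulrA.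
by under eq_bigr do rewrite -mulr_sumr; rewrite sum_deltal sum_deltal.
Qed.

Section PsdOperators.
Variable X : finType.

Lemma psd_sandwich (Y : finType) (T : Y -> X -> C) (M : op C X) :
  psd M -> psd (fun y y' => \sum_x \sum_x' T y x * M x x' * (T y' x')^*).
Proof.
move=> M_psd v; have := M_psd (fun x => \sum_y (T y x)^* * v y).
congr (_ <= _).
transitivity (\sum_x \sum_x' \sum_y \sum_y' (v y)^* * T y x * M x x' * (T y' x')^* * v y').
  apply: eq_bigr => x _; apply: eq_bigr => x' _.
  rewrite rmorph_sum /= !mulr_suml; apply: eq_bigr => y _.
  rewrite mulr_sumr; apply: eq_bigr => y' _.
  rewrite rmorphM /= conjCK; ring.
symmetry.
transitivity (\sum_y \sum_y' \sum_x \sum_x' (v y)^* * T y x * M x x' * (T y' x')^* * v y').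
  apply: eq_bigr => y _; apply: eq_bigr => y' _.
  rewrite mulr_sumr mulr_suml; apply: eq_bigr => x _.
  rewrite mulr_sumr mulr_suml; apply: eq_bigr => x' _; ring.
under eq_bigr do rewrite exchange_big.
rewrite [LHS]exchange_big /=; apply: eq_bigr => x _.
under eq_bigr do rewrite exchange_big.
by rewrite exchange_big.
Qed.

Lemma psd_scale (a : C) (M : op C X) : 0 <= a -> psd M -> psd (fun u v => a * M u v).
Proof.
move=> a_ge0 M_psd v.
rewrite (_ : \sum_x \sum_y _ = a * \sum_x \sum_y (v x)^* * M x y * v y).
  exact: mulr_ge0.
rewrite mulr_sumr; apply: eq_bigr => x _; rewrite mulr_sumr; apply: eq_bigr => y _; ring.
Qed.

Lemma psd_sum (I : finType) (F : I -> op C X) :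
  (forall i, psd (F i)) -> psd (fun u v => \sum_i F i u v).
Proof.
move=> F_psd v.
rewrite (_ : \sum_x \sum_y _ = \sum_i \sum_x \sum_y (v x)^* * F i x y * v y).
  by apply: sumr_ge0 => i _; exact: F_psd.
rewrite [RHS]exchange_big /=; apply: eq_bigr => x _.
rewrite [RHS]exchange_big /=; apply: eq_bigr => y _.
by rewrite mulr_sumr mulr_suml.
Qed.

Lemma psd_rank1 (psi : X -> C) : psd (fun x y => psi x * (psi y)^*).
Proof.
move=> v.
rewrite (_ : \sum_x \sum_y _ = (\sum_x (v x)^* * psi x) * (\sum_x (v x)^* * psi x)^*).
  exact: mul_conjC_ge0.
rewrite rmorph_sum mulr_suml; apply: eq_bigr => x _; rewrite mulr_sumr; apply: eq_bigr => y _.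
rewrite rmorphM /= conjCK; ring.
Qed.

End PsdOperators.

Section LinearFormDensity.
Variables (X : finType) (h : op C X -> C).
Hypothesis h_lin : linear_form h.

Lemma linear_form_eq0_rank1 :
  (forall psi : X -> C, h (fun x y => psi x * (psi y)^*) = 0) -> forall M, h M = 0.
Proof.
move=> h_rank1 M; rewrite linear_form_expand //; apply: big1 => x _; apply: big1 => y _.
rewrite (@sesquilinear_eq0 _ (fun x y => h (delta_op x y))) ?mulr0 // => psi.
by rewrite -[RHS](h_rank1 psi) [RHS]linear_form_expand.
Qed.

Lemma linear_form_eq0_density :
  (forall tau, density tau -> h tau = 0) -> forall M, h M = 0.
Proof.
move=> h_dens; apply: linear_form_eq0_rank1 => psi.
set n := \sum_x psi x * (psi x)^*.
have n_ge0 : 0 <= n by apply: sumr_ge0 => x _; exact: mul_conjC_ge0.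
have [n0 | n_neq0] := eqVneq n 0.
  have psi0 x : psi x = 0.
    have /eqP := @psumr_eq0P _ _ xpredT _ (fun i _ => mul_conjC_ge0 (psi i)) n0 x isT.
    by rewrite mulf_eq0 conjC_eq0 orbb => /eqP.
  rewrite -[RHS](linear_form0 h_lin); congr h.
  by apply: op_ext => x y; rewrite psi0 mul0r.
have tau_dens : density (fun x y => n^-1 * (psi x * (psi y)^*)).
  split; first by apply: psd_scale; [rewrite invr_ge0 | exact: psd_rank1].
  by rewrite /tr -mulr_sumr mulVf.
have /eqP := h_dens _ tau_dens; rewrite linear_formZ //.
by rewrite mulf_eq0 invr_eq0 (negbTE n_neq0) => /eqP.
Qed.

End LinearFormDensity.

Lemma sum2_delta (X : finType) (x0 x0' : X) (F : X -> X -> C) (a b : C) :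
  \sum_x \sum_x' a * (x == x0)%:R * F x x' * (b * (x' == x0')%:R)^* = a * F x0 x0' * b^*.
Proof.
rewrite (bigD1 x0) //= [S in _ + S]big1 => [|x /negbTE ->]; last first.
  by apply: big1 => x' _; rewrite !mulr0 !mul0r.
rewrite addr0 (bigD1 x0') //= [S in _ + S]big1 => [|x' /negbTE ->]; last first.
  by rewrite rmorphM /= conjC_nat !mulr0.
by rewrite addr0 !eqxx rmorphM /= conjC_nat !mulr1.
Qed.

Section UniformTimesIdentity.
Variables A B : finType.
Hypothesis B_gt0 : (0 < #|B|)%N.

(* u^B (x) id is the average over b of the CP maps rho |-> |b><b| (x) rho *)
Lemma unif_id_channel : channel (@unif_id C A B).
Proof.
split.
- by move=> a M N x y; rewrite /unif_id /opT; ring.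
- move=> K M M_psd.
  pose T (b : B) (y : (K * (B * A))%type) (x : (K * (A * unit))%type) : C :=
    (y.2.1 == b)%:R * (x == (y.1, (y.2.2, tt)))%:R.
  have invB_ge0 : 0 <= #|B|%:R^-1 :> C by rewrite invr_ge0 ler0n.
  have := psd_scale invB_ge0 (psd_sum (fun b => psd_sandwich (T b) M_psd)).
  congr psd; apply: op_ext => y y'.
  rewrite /idtens /unif_id /opT /unif /T /=.
  under eq_bigr do rewrite sum2_delta rmorph_nat.
  rewrite (_ : \sum_i _ = (y.2.1 == y'.2.1)%:R * M (y.1, (y.2.2, tt)) (y'.1, (y'.2.2, tt))).
    by ring.
  rewrite -[RHS](sum_deltal y'.2.1 (fun i => (y.2.1 == i)%:R * M _ _)).
  by apply: eq_bigr => i _; rewrite [i == _]eq_sym; ring.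
- move=> M; rewrite /tr /unif_id /opT sum_pair [RHS]sum_pair.
  under [RHS]eq_bigr do rewrite sum_unit.
  rewrite -[RHS]mul1r -(sum_unif B_gt0) mulr_suml; apply: eq_bigr => b _.
  by rewrite mulr_sumr.
Qed.

Lemma unif_id_marg_unif : marg_unif (@unif_id C A B).
Proof. by move=> M p q; rewrite /unif_id /opT /ptrL /= -mulr_suml sum_unif // mul1r. Qed.

End UniformTimesIdentity.

Section Reflection.
Variable X : finType.

Definition reflection (z : X -> C) (beta : C) : X -> X -> C :=
  fun a b => (a == b)%:R - beta * z a * (z b)^*.

Lemma reflection_adj (z : X -> C) (beta : C) a b :
  beta^* = beta -> (reflection z beta a b)^* = reflection z beta b a.
Proof.
move=> beta_real.
by rewrite /reflection rmorphB !rmorphM /= conjC_nat beta_real conjCK eq_sym; ring.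
Qed.

Lemma reflection_involutive (z : X -> C) (beta : C) a b :
  beta * \sum_t z t * (z t)^* = 2 ->
  \sum_t reflection z beta a t * reflection z beta t b = (a == b)%:R.
Proof.
move=> beta_norm.
have z_reflected : \sum_t (z t)^* * reflection z beta t b = - (z b)^*.
  rewrite /reflection; under eq_bigr do rewrite mulrBr.
  rewrite sumrB sum_deltar.
  rewrite (_ : \sum_t _ = beta * (\sum_t z t * (z t)^*) * (z b)^*); first by rewrite beta_norm; ring.
  by rewrite mulr_sumr mulr_suml; apply: eq_bigr => t _; ring.
transitivity (\sum_t (t == a)%:R * reflection z beta t b
              - beta * z a * \sum_t (z t)^* * reflection z beta t b).
  by rewrite mulr_sumr -sumrB; apply: eq_bigr => t _; rewrite /reflection eq_sym; ring.
by rewrite z_reflected sum_deltal /reflection; ring.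
Qed.

(* The Householder reflection exchanging the basis vector r0 and the unit
   vector along w (up to phase) is built from z = e_r0 + mu w with
   |mu| = 1/|w| and mu w_r0 >= 0. *)
Lemma householder (w : X -> C) (r0 : X) : w r0 != 0 ->
  exists (H : X -> X -> C) (mu : C),
   [/\ forall a b, (H a b)^* = H b a,
       forall a b, \sum_t H a t * H t b = (a == b)%:R,
       forall a, H a r0 = - mu * w a &
       mu * mu^* * \sum_t w t * (w t)^* = 1].
Proof.
move=> w_r0_neq0.
set s := \sum_t w t * (w t)^*.
set q := w r0 * (w r0)^*.
have q_gt0 : 0 < q by rewrite lt_def mul_conjC_ge0 andbT mulf_neq0 // conjC_eq0.
have q_le_s : q <= s.
  by rewrite /s (bigD1 r0) //= lerDl; apply: sumr_ge0 => t _; exact: mul_conjC_ge0.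
have s_gt0 : 0 < s by apply: lt_le_trans q_le_s.
set d := sqrtC (q * s).
have d_gt0 : 0 < d by rewrite sqrtC_gt0 mulr_gt0.
have d_neq0 : d != 0 by rewrite lt0r_neq0.
have d_real : d^* = d by apply: geC0_conj; apply: ltW.
have dd : d * d = q * s by rewrite -expr2 sqrtCK.
set mu := (w r0)^* / d.
set rho := mu * w r0.
have rhoE : rho = q / d by rewrite /rho /mu /q; field.
have rho_ge0 : 0 <= rho by rewrite rhoE divr_ge0 // ltW.
have rho_real : rho^* = rho by apply: geC0_conj.
have mu_norm : mu * mu^* * s = 1.
  rewrite /mu rmorphM /= fmorphV /= d_real conjCK.
  transitivity ((q * s) / (d * d)); first by rewrite /q; field.
  by rewrite dd divff // mulf_neq0 // lt0r_neq0.
pose z t := (t == r0)%:R + mu * w t.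
have z_norm : \sum_t z t * (z t)^* = 2 * (1 + rho).
  transitivity (\sum_t ((t == r0)%:R + ((t == r0)%:R * (mu * w t)^* + (t == r0)%:R * (mu * w t))
                        + mu * mu^* * (w t * (w t)^*))).
    apply: eq_bigr => t _; rewrite /z rmorphD /= conjC_nat rmorphM /=.
    by case: (t == r0) => /=; ring.
  rewrite !big_split /= -mulr_sumr -/s mu_norm !sum_deltal -/rho rho_real.
  have -> : \sum_t (t == r0)%:R = 1 :> C.
    by rewrite -[RHS](sum_deltar r0 (fun _ => 1)); apply: eq_bigr => t _; rewrite mul1r.
  ring.
have rho1_neq0 : 1 + rho != 0 by rewrite lt0r_neq0 // ltr_pwDl.
have two_neq0 : 2 != 0 :> C by rewrite pnatr_eq0.
pose beta := (1 + rho)^-1.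
have beta_real : beta^* = beta by rewrite /beta fmorphV rmorphD /= rho_real rmorph1.
exists (reflection z beta), mu; split.
- by move=> a b; apply: reflection_adj.
- by move=> a b; apply: reflection_involutive; rewrite z_norm /beta; field.
- move=> a; rewrite /reflection /z eqxx /= -/rho rmorphD /= rho_real conjC_nat /beta.
  by field.
- exact: mu_norm.
Qed.

End Reflection.

Lemma delta_in_span (I X : finType) (u : I -> X -> C) :
  (forall w : X -> C, (forall i, \sum_x (w x)^* * u i x = 0) -> forall x, w x = 0) ->
  forall x0, exists alpha : I -> C, forall x, (x == x0)%:R = \sum_i alpha i * u i x.
Proof.
move=> orth0 x0.
pose U : 'M[C]_(#|I|, #|X|) := \matrix_(i, j) u (enum_val i) (enum_val j).
have U_full : row_full U.
  apply: contraT => U_not_full.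
  pose K := kermx U^T.
  have : K != 0.
    rewrite -mxrank_eq0 mxrank_ker mxrank_tr subn_eq0 -ltnNge ltn_neqAle rank_leq_col andbT.
    exact: U_not_full.
  case/matrix0Pn => i0 [j0 K_neq0].
  suff : (K i0 j0)^* = 0 by move/eqP; rewrite conjC_eq0 (negbTE K_neq0).
  rewrite -[j0]enum_valK; apply: (orth0 (fun x => (K i0 (enum_rank x))^*)) => i.
  have /matrixP/(_ i0 (enum_rank i)) := mulmx_ker U^T.
  rewrite !mxE => sum0; rewrite -[RHS]sum0 (reindex (@enum_rank X)) /=; last first.
    by apply: onW_bij; exact: enum_rank_bij.
  by apply: eq_bigr => x _; rewrite conjCK !mxE !enum_rankK.
have /submxP [D defD] := submx_full (delta_mx 0 (enum_rank x0) : 'M_(1, #|X|)) U_full.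
exists (fun i => D 0 (enum_rank i)) => x.
move/matrixP: defD => /(_ 0 (enum_rank x)).
rewrite !mxE /= (inj_eq enum_rank_inj) eq_sym => ->.
rewrite (reindex (@enum_rank I)) /=; last by apply: onW_bij; exact: enum_rank_bij.
by apply: eq_bigr => i _; rewrite mxE !enum_rankK.
Qed.

Section ConditionallyUnital.
Variables (R B : finType) (E : op C (R * B)%type -> op C B).
Hypotheses (B_gt0 : (0 < #|B|)%N) (E_lin : is_linear E).

Definition unital_defect b b' (X : op C R) : C :=
  E (opT X (@unif C B)) b b' - tr X * @unif C B b b'.

Lemma unital_defect_linear b b' : linear_form (unital_defect b b').
Proof.
move=> a M N; rewrite /unital_defect.
rewrite (_ : opT _ _ = fun p q => a * opT M (@unif C B) p q + opT N (@unif C B) p q).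
  by rewrite E_lin /tr big_split /= -mulr_sumr; ring.
by apply: op_ext => p q; rewrite /opT; ring.
Qed.

Lemma cond_unital_tensor_unif : cond_unital E ->
  forall X b b', E (opT X (@unif C B)) b b' = tr X * @unif C B b b'.
Proof.
move=> E_cu X b b'; apply/eqP; rewrite -subr_eq0; apply/eqP.
apply: (linear_form_eq0_density (unital_defect_linear b b')) => tau tau_dens.
by rewrite /unital_defect E_cu //; case: tau_dens => _ ->; rewrite mul1r subrr.
Qed.

Lemma tr_tensor_unif (Y : op C R) :
  TP E -> \sum_b E (opT Y (@unif C B)) b b = tr Y.
Proof.
move=> E_tp; have := E_tp (opT Y (@unif C B)); rewrite /tr => ->; rewrite sum_pair.
by apply: eq_bigr => r _; rewrite /opT /= -mulr_sumr sum_unif // mulr1.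
Qed.

End ConditionallyUnital.

Section Superchannel.
Variables (A B A' R : finType) (V : (R * A)%type -> A' -> C).
Variable E : op C (R * B)%type -> op C B.

Lemma superext_unif_id M b a b' a' :
  superext V E (@unif_id C A B) M (b, a) (b', a') =
  E (opT (fun r r' => \sum_x1 \sum_x2 V (r, a) x1 * M (x1, tt) (x2, tt) * (V (r', a') x2)^*)
         (@unif C B)) b b'.
Proof.
rewrite /superext /tensid /assocRL /idtens /assocLR /unif_id /isoch /opT /=.
by congr (E _ b b'); apply: op_ext => -[r be] -[r' be'] /=; rewrite mulrC.
Qed.

Lemma superext_marg_unif (C0 C1 : finType) (N : op C (A * C0)%type -> op C (B * C1)%type) :
  marg_unif N -> forall M b c b' c',
  superext V E N M (b, c) (b', c') =
  E (opT (fun r r' => ptrL (N (fun p p' =>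
           tensid (isoch V) M ((r, p.1), p.2) ((r', p'.1), p'.2))) c c')
         (@unif C B)) b b'.
Proof.
move=> N_mu M b c b' c'; rewrite /superext /tensid /assocRL /idtens /assocLR /=.
by congr (E _ b b'); apply: op_ext => -[r be] -[r' be'] /=; rewrite N_mu /opT /= mulrC.
Qed.

Lemma cond_unital_compl_unif_pres :
  (0 < #|B|)%N -> channel E -> cond_unital E -> compl_unif_pres V E.
Proof.
move=> B_gt0 [E_lin _ _] E_cu C0 C1 N _ N_mu M [b c] [b' c'].
rewrite superext_marg_unif // cond_unital_tensor_unif // /opT /ptrL /=.
under eq_bigr do rewrite superext_marg_unif // cond_unital_tensor_unif //.
by rewrite -mulr_sumr sum_unif // mulr1 mulrC.
Qed.

Lemma marg_unif_unif_id_rank1 : (0 < #|B|)%N -> TP E ->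
  marg_unif (superext V E (@unif_id C A B)) ->
  forall (i i' : (A * A')%type) b b',
  let Y := fun r r' => V (r, i.1) i.2 * (V (r', i'.1) i'.2)^* in
  E (opT Y (@unif C B)) b b' = tr Y * @unif C B b b'.
Proof.
move=> B_gt0 E_tp VE_mu i i' b b' Y.
pose M : op C (A' * unit)%type := fun p q => (p.1 == i.2)%:R * (q.1 == i'.2)%:R.
have defY : (fun r r' => \sum_x1 \sum_x2 V (r, i.1) x1 * M (x1, tt) (x2, tt) * (V (r', i'.1) x2)^*)
            = Y.
  apply: op_ext => r r'; rewrite /M /Y /=.
  transitivity (\sum_x1 (x1 == i.2)%:R * (V (r, i.1) x1 *
                 \sum_x2 (x2 == i'.2)%:R * (V (r', i'.1) x2)^*)).
    by apply: eq_bigr => x1 _; rewrite !mulr_sumr; apply: eq_bigr => x2 _; ring.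
  by rewrite !sum_deltal.
have := VE_mu M (b, i.1) (b', i'.1).
rewrite superext_unif_id defY /opT /ptrL /=.
under eq_bigr do rewrite superext_unif_id defY.
by rewrite tr_tensor_unif // mulrC.
Qed.

Section StandardForm.
Hypotheses (V_iso : is_isometry V) (E_ch : channel E) (VE_std : std_form V E).

Section Compression.
Variables (R' : finType) (W : R -> R' -> C).
Hypothesis W_coiso : forall i j, \sum_r (W r i)^* * W r j = (i == j)%:R.
Hypothesis W_proj :
  forall r a x, \sum_r' (\sum_i W r i * (W r' i)^*) * V (r', a) x = V (r, a) x.

Definition compress_iso : (R' * A)%type -> A' -> C :=
  fun p x => \sum_r (W r p.1)^* * V (r, p.2) x.

Definition compress_ch : op C (R' * B)%type -> op C B :=
  fun X => E (fun p q => \sum_i \sum_j W p.1 i * X (i, p.2) (j, q.2) * (W q.1 j)^*).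

Lemma W_compress_iso r a x : \sum_i W r i * compress_iso (i, a) x = V (r, a) x.
Proof.
rewrite -[RHS]W_proj /compress_iso /=; under eq_bigr do rewrite mulr_sumr.
rewrite exchange_big /=; apply: eq_bigr => r' _; rewrite mulr_suml.
by apply: eq_bigr => i _; rewrite mulrA.
Qed.

Lemma compress_iso_isometry : is_isometry compress_iso.
Proof.
move=> x1 x2; rewrite -V_iso sum_pair [RHS]sum_pair.
transitivity (\sum_i \sum_a \sum_r W r i * (V (r, a) x1)^* * compress_iso (i, a) x2).
  apply: eq_bigr => i _; apply: eq_bigr => a _.
  rewrite {1}/compress_iso rmorph_sum mulr_suml; apply: eq_bigr => r _.
  by rewrite rmorphM /= conjCK.
symmetry; under eq_bigr do under eq_bigr do rewrite -[V _ x2]W_compress_iso mulr_sumr.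
rewrite exchange_big /=; under eq_bigr do rewrite exchange_big /=.
rewrite exchange_big /=.
by apply: eq_bigr => i _; apply: eq_bigr => a _; apply: eq_bigr => r _; ring.
Qed.

Lemma compress_ch_channel : channel compress_ch.
Proof.
have [E_lin E_cp E_tp] := E_ch.
split.
- move=> a M N x y; rewrite /compress_ch -E_lin; congr (E _ x y).
  apply: op_ext => p q; rewrite mulr_sumr -big_split; apply: eq_bigr => i _.
  by rewrite mulr_sumr -big_split; apply: eq_bigr => j _ /=; ring.
- move=> K M M_psd; apply: (E_cp _ (fun y y' =>
    \sum_i \sum_j W y.2.1 i * M (y.1, (i, y.2.2)) (y'.1, (j, y'.2.2)) * (W y'.2.1 j)^*)).
  pose T (y : (K * (R * B))%type) (x : (K * (R' * B))%type) :=
    W y.2.1 x.2.1 * ((x.1 == y.1) && (x.2.2 == y.2.2))%:R.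
  have := psd_sandwich T M_psd; congr psd; apply: op_ext => y y'.
  under eq_bigr do (under eq_bigr do rewrite -mulrA; rewrite -mulr_sumr).
  rewrite /T sum_delta_fst_snd; apply: eq_bigr => i _.
  rewrite mulr_sumr.
  transitivity (\sum_x' (W y'.2.1 x'.2.1)^* * ((x'.1 == y'.1) && (x'.2.2 == y'.2.2))%:R *
                  (W y.2.1 i * M (y.1, (i, y.2.2)) x')).
    by apply: eq_bigr => x' _; rewrite rmorphM /= conjC_nat; ring.
  rewrite (sum_delta_fst_snd y'.1 y'.2.2 (fun x' => W y.2.1 i * M (y.1, (i, y.2.2)) x')
            (fun j => (W y'.2.1 j)^*)).
  by apply: eq_bigr => j _ /=; ring.
- move=> X; rewrite /compress_ch E_tp /tr sum_pair [RHS]sum_pair.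
  rewrite exchange_big [RHS]exchange_big /=; apply: eq_bigr => b _.
  rewrite exchange_big /=; apply: eq_bigr => i _.
  rewrite exchange_big /= -(sum_deltal i (fun j => X (i, b) (j, b))) /=.
  apply: eq_bigr => j _; rewrite eq_sym -(conjC_nat C) -W_coiso rmorph_sum mulr_suml.
  by apply: eq_bigr => r _ /=; rewrite rmorphM /= conjCK; ring.
Qed.

Lemma superch_compress (N : op C A -> op C B) M x y :
  is_linear N -> superch compress_iso compress_ch N M x y = superch V E N M x y.
Proof.
move=> N_lin; rewrite /superch /compress_ch; congr (E _ x y).
apply: op_ext => -[r b] -[r' b'] /=; rewrite /idtens /=.
pose h := fun Z => N Z b b'.
have h_lin : linear_form h by exact: linear_form_entry.
transitivity (h (fun a a' =>
  \sum_i \sum_j (W r i * (W r' j)^*) * isoch compress_iso M (i, a) (j, a'))).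
  rewrite (linear_form_sum h_lin (fun i a a' => \sum_j _)); apply: eq_bigr => i _.
  rewrite (linear_form_sum h_lin (fun j a a' => _ * _)); apply: eq_bigr => j _.
  by rewrite linear_formZ // /h; ring.
rewrite /h; congr (N _ b b'); apply: op_ext => a a' /=; rewrite /isoch.
transitivity (\sum_x1 \sum_x2 \sum_i \sum_j
  W r i * compress_iso (i, a) x1 * M x1 x2 * ((W r' j)^* * (compress_iso (j, a') x2)^*)).
  rewrite -exchange_big2; apply: eq_bigr => i _; apply: eq_bigr => j _.
  rewrite mulr_sumr; apply: eq_bigr => x1 _.
  by rewrite mulr_sumr; apply: eq_bigr => x2 _; ring.
apply: eq_bigr => x1 _; apply: eq_bigr => x2 _.
rewrite -[V (r, a) x1]W_compress_iso -[V (r', a') x2]W_compress_iso.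
rewrite rmorph_sum !mulr_suml; apply: eq_bigr => i _.
by rewrite [RHS]mulr_sumr; apply: eq_bigr => j _; rewrite rmorphM /=; ring.
Qed.

Lemma std_form_card_le : (#|R| <= #|R'|)%N.
Proof.
apply: (VE_std compress_iso_isometry compress_ch_channel) => N N_lin M x y.
exact: superch_compress.
Qed.

End Compression.

(* A nonzero w orthogonal to every V(., a) x would let a Householder reflection
   move the range of V off the basis vector r0, giving a realization with
   |R| - 1 auxiliary dimensions. *)
Lemma std_form_orthogonal0 (w : R -> C) :
  (forall a x, \sum_r (w r)^* * V (r, a) x = 0) -> forall r, w r = 0.
Proof.
move=> w_orth r0; apply/eqP; apply: contraT => w_r0_neq0.
have [H [mu [H_adj H_inv H_r0 mu_norm]]] := householder w_r0_neq0.
pose W (r : R) (i : {x in predC1 r0}) := H r (val i).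
have R_gt0 : (0 < #|R|)%N by apply/card_gt0P; exists r0.
suff : (#|R| <= #|R|.-1)%N by case: #|R| R_gt0 => // n _; rewrite ltnn.
have := @std_form_card_le _ W; rewrite card_sig cardC1; apply.
- by move=> i j; under eq_bigr do rewrite H_adj; rewrite H_inv val_eqE.
- move=> r a x.
  have W_proj r' : \sum_i W r i * (W r' i)^* = (r == r')%:R - mu * mu^* * w r * (w r')^*.
    under eq_bigr do rewrite H_adj.
    rewrite -(big_sub (predC1 r0) (fun t => H r t * H t r')).
    have := H_inv r r'; rewrite (bigD1 r0) //= => <-.
    rewrite -(H_adj r' r0) !H_r0 rmorphM rmorphN /= (eq_bigl (fun t => t != r0)) //; ring.
  under eq_bigr do rewrite W_proj mulrBl.
  rewrite sumrB; under eq_bigr do rewrite eq_sym.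
  rewrite sum_deltal (_ : \sum_r' _ = mu * mu^* * w r * \sum_r' (w r')^* * V (r', a) x).
    by rewrite w_orth mulr0 subr0.
  by rewrite mulr_sumr; apply: eq_bigr => r' _; ring.
Qed.

Lemma std_form_delta_in_span r0 :
  exists alpha : (A * A')%type -> C, forall r, (r == r0)%:R = \sum_i alpha i * V (r, i.1) i.2.
Proof.
apply: (delta_in_span (u := fun i r => V (r, i.1) i.2)) => w w_orth.
by apply: std_form_orthogonal0 => a x; apply: (w_orth (a, x)).
Qed.

(* By the spanning property, the operators |V(.,a)x><V(.,a')x'| span all
   operators on R, and on each of them E is unital by the rank-one case. *)
Lemma marg_unif_cond_unital : (0 < #|B|)%N ->
  marg_unif (superext V E (@unif_id C A B)) -> cond_unital E.
Proof.
move=> B_gt0 VE_mu tau tau_dens b b'.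
have [E_lin _ E_tp] := E_ch.
have h_lin := unital_defect_linear E_lin b b'.
suff : unital_defect E b b' tau = 0.
  rewrite /unital_defect; case: tau_dens => _ ->.
  by rewrite mul1r => /eqP; rewrite subr_eq0 => /eqP.
rewrite (linear_form_expand h_lin); apply: big1 => r _; apply: big1 => s _.
pose kv (i : (A * A')%type) r := V (r, i.1) i.2.
have [al def_r] := std_form_delta_in_span r; have [be def_s] := std_form_delta_in_span s.
have -> : delta_op r s = fun u v =>
    \sum_i \sum_i' (al i * (be i')^*) * (kv i u * (kv i' v)^*).
  apply: op_ext => u v; rewrite /delta_op def_r -[(v == s)%:R]conjC_nat def_s.
  rewrite rmorph_sum mulr_suml; apply: eq_bigr => i _.
  by rewrite mulr_sumr; apply: eq_bigr => i' _; rewrite rmorphM /= /kv; ring.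
rewrite (linear_form_sum h_lin (fun i u v => \sum_i' _)) big1 ?mulr0 // => i _.
rewrite (linear_form_sum h_lin (fun i' u v => _ * _)) big1 // => i' _.
rewrite (linear_formZ h_lin _ (fun u v => kv i u * (kv i' v)^*)).
by rewrite /unital_defect marg_unif_unif_id_rank1 // subrr mulr0.
Qed.

End StandardForm.

End Superchannel.
End Operators.

Theorem theorem11 (C : numClosedFieldType) (A B A' R : finType)
  (V : (R * A)%type -> A' -> C) (E : op C (R * B)%type -> op C B) :
  (0 < #|A|)%N -> (0 < #|B|)%N -> (0 < #|A'|)%N ->
  is_isometry V -> channel E -> std_form V E ->
  (compl_unif_pres V E <-> marg_unif (superext V E (@unif_id C A B)))
  /\ (marg_unif (superext V E (@unif_id C A B)) <-> cond_unital E).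
Proof.
move=> _ B_gt0 _ V_iso E_ch VE_std.
have one_two : compl_unif_pres V E -> marg_unif (superext V E (@unif_id C A B)).
  by apply; [exact: unif_id_channel | exact: unif_id_marg_unif].
have two_three := marg_unif_cond_unital V_iso E_ch VE_std B_gt0.
have three_one := cond_unital_compl_unif_pres V B_gt0 E_ch.
split; split.
- exact: one_two.
- by move/two_three/three_one.
- exact: two_three.
- by move/three_one/one_two.
Qed.
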